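(* Let $N\ge1$ and consider linear subsystems $\Sigma_1,\dots,\Sigma_N$ and their interconnection $\Sigma$ as described in the context, with safe sets $X_i$, input sets $U_i$, $X=\prod_i X_i$, $U=\prod_i U_i$. For each $i\in[1;N]$ let $\rho_i\ge0$ and let $C_i^{\rho_i}:\mathbb{R}^{n_i}\rightrightarrows U_i$ be a $\rho_i$-inner safety controller for $\Sigma_i$ and safe set $X_i$. Define $C^{\rho}:\mathbb{R}^n\rightrightarrows U$ by $C^\rho(x)=\emptyset$ for $x\in\mathbb{R}^n\setminus X$ and, for $x=[x_1;\dots;x_N]\in X$, $$C^{\rho}(x)=\{u=[u_1;\dots;u_N]\in U\mid u_i\in C_i^{\rho_i}(x_i)\ \text{for all } i\in[1;N]\}.$$ Then $C^{\rho}$ is a $\rho$-inner safety controller for the interconnected system $\Sigma$, safe set $X$ and input set $U$, where $\rho=\|[\rho_1;\dots;\rho_N]\|$ (infinity norm).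
   Context: Subsystem $\Sigma_i$ is linear: $x_i(t+1)=A_ix_i(t)+B_iu_i(t)+D_iz_i(t)+w_i(t)$ with $A_i\in\mathbb{R}^{n_i\times n_i}$, $B_i\in\mathbb{R}^{n_i\times m_i}$, $D_i\in\mathbb{R}^{n_i\times p_i}$, $w_i(t)\in W_i\subseteq\mathbb{R}^{n_i}$ (compact disturbance set), and internal input $z_i=[z_{i1};\dots;z_{i(i-1)};z_{i(i+1)};\dots;z_{iN}]\in\mathbb{R}^{p_i}$, $z_{ij}\in\mathbb{R}^{p_{ij}}$; outputs are $h_{ij}(x_i)=H_{ij}x_i$ with $H_{ij}\in\mathbb{R}^{p_{ji}\times n_i}$ for $j\ne i$. The interconnected system $\Sigma$ has state $x=[x_1;\dots;x_N]\in\mathbb{R}^n$, input $u=[u_1;\dots;u_N]$, disturbance $w\in W=\prod_iW_i$, and transition $f(x,u,w)=[A_1x_1+B_1u_1+D_1z_1+w_1;\dots;A_Nx_N+B_Nu_N+D_Nz_N+w_N]$ with $z_{ij}=H_{ji}x_j$. $X_i\subseteq\mathbb{R}^{n_i}$, $U_i\subseteq\mathbb{R}^{m_i}$ are compact. For $i\ne j$ there are compact sets $Z_{ij}\subseteq\mathbb{R}^{p_{ij}}$ with $H_{ji}(X_j)\subseteq Z_{ij}$, and $Z_i=\prod_{j\ne i}Z_{ij}$; Minkowski sums of sets are denoted by $+$. A $\rho_i$-inner safety controller for $\Sigma_i$ and $X_i$ (in the paper, one obtained from an inner approximation of the maximal robust controlled invariant set with accuracy parameter $\rho_i$) is a set-valued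 map $C_i:\mathbb{R}^{n_i}\rightrightarrows U_i$ with (1) $C_i(x_i)\subseteq U_i$ for all $x_i$; (2) $\mathrm{dom}(C_i)=\{x_i\mid C_i(x_i)\ne\emptyset\}\subseteq X_i$; (3) for all $x_i\in\mathrm{dom}(C_i)$ and $u_i\in C_i(x_i)$: $A_ix_i+B_iu_i+D_iZ_i+W_i\subseteq\mathrm{dom}(C_i)$. A $\rho$-inner safety controller for $\Sigma$, $X$ and $U$ is a set-valued map $C:\mathbb{R}^n\rightrightarrows U$ with (1) $C(x)\subseteq U$; (2) $\mathrm{dom}(C)\subseteq X$; (3) for all $x\in\mathrm{dom}(C)$, $u\in C(x)$, $w\in W$: $f(x,u,w)\in\mathrm{dom}(C)$. *)

From HB Require Import structures.
From mathcomp Require Import all_boot all_order all_algebra.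
From mathcomp Require Import all_classical all_reals all_analysis.
Unset Printing Implicit Defensive.
Import Order.TTheory GRing.Theory Num.Theory.
Import numFieldNormedType.Exports.
Local Open Scope classical_set_scope.
Local Open Scope ring_scope.

Definition sdom {T S : Type} (C : T -> set S) : set T := [set x | C x !=set0].

Section Defs.
Variables (R : realType) (N : nat) (n m : 'I_N -> nat) (p : 'I_N -> 'I_N -> nat).
(* Subsystem i:  x_i(t+1) = A_i x_i + B_i u_i + D_i z_i + w_i,
   with D_i z_i = \sum_{j <> i} D_ij z_ij  (block decomposition of D_i),
   z_ij in R^{p_ij}, and the interconnection z_ij = H_ji x_j,
   H_ji : R^{p_ij x n_j}. *)
Variables (A : forall i, 'M[R]_(n i)) (B : forall i, 'M[R]_(n i, m i))
          (D : forall i j, 'M[R]_(n i, p i j)) (H : forall j i, 'M[R]_(p i j, n j)).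
Variables (W X : forall i, set 'cV[R]_(n i)) (U : forall i, set 'cV[R]_(m i))
          (Z : forall i j, set 'cV[R]_(p i j)).

(* rho_i-inner safety controller for Sigma_i and X_i (rho_i is only a label). *)
Definition sub_inner_safety_controller (i : 'I_N) (rho_i : R)
    (Ci : 'cV[R]_(n i) -> set 'cV[R]_(m i)) : Prop :=
  [/\ (forall x, Ci x `<=` U i),
      sdom Ci `<=` X i &
      (forall x u, sdom Ci x -> Ci x u ->
        forall (z : forall j, 'cV[R]_(p i j)),
          (forall j, j != i -> Z i j (z j)) ->
          forall w, W i w ->
            sdom Ci (A i *m x + B i *m u + \sum_(j | j != i) D i j *m z j + w))].

Definition gstate := forall i : 'I_N, 'cV[R]_(n i).
Definition ginput := forall i : 'I_N, 'cV[R]_(m i).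

Definition Xprod : set gstate := [set x | forall i, X i (x i)].
Definition Uprod : set ginput := [set u | forall i, U i (u i)].
Definition Wprod : set gstate := [set w | forall i, W i (w i)].

Definition f_inter (x : gstate) (u : ginput) (w : gstate) : gstate :=
  fun i => A i *m x i + B i *m u i + \sum_(j | j != i) D i j *m (H j i *m x j) + w i.

(* rho-inner safety controller for Sigma, X and U (rho is only a label). *)
Definition inter_inner_safety_controller (rho : R) (C : gstate -> set ginput) : Prop :=
  [/\ (forall x, C x `<=` Uprod),
      sdom C `<=` Xprod &
      (forall x u w, sdom C x -> C x u -> Wprod w -> sdom C (f_inter x u w))].

Definition compose_controller (Cs : forall i, 'cV[R]_(n i) -> set 'cV[R]_(m i))
    : gstate -> set ginput :=
  fun x => [set u | Xprod x /\ Uprod u /\ (forall i, Cs i (x i) (u i))].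

End Defs.

From HB Require Import structures.
From mathcomp Require Import all_boot all_order all_algebra.
From mathcomp Require Import all_classical all_reals all_analysis.
Import Order.TTheory GRing.Theory Num.Theory.
Import numFieldNormedType.Exports.
Local Open Scope classical_set_scope.
Local Open Scope ring_scope.

(* The domain of the composed controller is the product of the domains of the
   C_i.  Along the interconnected dynamics, subsystem i sees the internal input
   z_ij = H_ji x_j, which lies in Z_ij because x_j is in dom C_j, hence in X_j;
   so robust invariance of each dom C_i against all of Z_i covers the coupling,
   and the successor state of the network stays in the product of the domains. *)

Section ComposedController.

Variables (R : realType) (N : nat) (n m : 'I_N -> nat) (p : 'I_N -> 'I_N -> nat).
Variables (A : forall i, 'M[R]_(n i)) (B : forall i, 'M[R]_(n i, m i))
          (D : forall i j, 'M[R]_(n i, p i j)) (H : forall j i, 'M[R]_(p i j, n j)).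
Variables (W X : forall i, set 'cV[R]_(n i)) (U : forall i, set 'cV[R]_(m i))
          (Z : forall i j, set 'cV[R]_(p i j)).
Variable Cs : forall i, 'cV[R]_(n i) -> set 'cV[R]_(m i).
Variable rho : 'I_N -> R.
Hypothesis hCs :
  forall i, sub_inner_safety_controller R N n m p A B D W X U Z i (rho i) (Cs i).
Hypothesis hHZ : forall i j, i != j -> (fun x => H j i *m x) @` X j `<=` Z i j.

Set Implicit Arguments.
Unset Strict Implicit.

Local Notation C := (compose_controller R N n m X U Cs).

Lemma compose_controller_sub_Uprod x : C x `<=` Uprod R N m U.
Proof. by move=> u [_ []]. Qed.

Lemma sdom_compose_controller_sub_Xprod : sdom C `<=` Xprod R N n X.
Proof. by move=> x [u []]. Qed.

Lemma sdom_compose_controller x : (forall i, sdom (Cs i) (x i)) -> sdom C x.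
Proof.
move=> domx; pose u i := projT1 (cid (domx i)).
have Csu i : Cs i (x i) (u i) by exact: projT2 (cid (domx i)).
exists u; split; [|split] => // i; have [CsU domX _] := hCs i.
- by apply: domX; exists (u i).
- exact: CsU (Csu i).
Qed.

Lemma f_inter_sdom x u w : C x u -> Wprod R N n W w ->
  forall i, sdom (Cs i) (f_inter R N n m p A B D H x u w i).
Proof.
move=> [Xx [_ Csu]] Ww i; have [_ _ Cs_inv] := hCs i.
apply: (Cs_inv _ _ (ex_intro _ (u i) (Csu i)) (Csu i)) (Ww i).
move=> j ji; apply: (hHZ i j); first by rewrite eq_sym.
by exists (x j).
Qed.

End ComposedController.

Theorem proposition1 (R : realType) (N : nat) (hN : (0 < N)%N)
  (n m : 'I_N -> nat) (p : 'I_N -> 'I_N -> nat)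
  (A : forall i, 'M[R]_(n i)) (B : forall i, 'M[R]_(n i, m i))
  (D : forall i j, 'M[R]_(n i, p i j)) (H : forall j i, 'M[R]_(p i j, n j))
  (W X : forall i, set 'cV[R]_(n i)) (U : forall i, set 'cV[R]_(m i))
  (Z : forall i j, set 'cV[R]_(p i j))
  (hW : forall i, compact (W i)) (hX : forall i, compact (X i))
  (hU : forall i, compact (U i)) (hZ : forall i j, i != j -> compact (Z i j))
  (hHZ : forall i j, i != j -> (fun x => H j i *m x) @` X j `<=` Z i j)
  (rho : 'I_N -> R) (hrho : forall i, 0 <= rho i)
  (Cs : forall i, 'cV[R]_(n i) -> set 'cV[R]_(m i))
  (hCs : forall i, sub_inner_safety_controller R N n m p A B D W X U Z i (rho i) (Cs i)) :
  inter_inner_safety_controller R N n m p A B D H W X U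
    (\big[Num.max/0]_(i < N) `|rho i|) (compose_controller R N n m X U Cs).
Proof.
(* Compactness, [hN] and the value of [rho] play no role: [rho] is only a label. *)
split.
- exact: compose_controller_sub_Uprod.
- exact: sdom_compose_controller_sub_Xprod.
- move=> x u w _ Cxu Ww; apply: (sdom_compose_controller hCs).
  exact: (f_inter_sdom hCs hHZ Cxu Ww).
Qed.
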